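(* Let $\mathcal{D}=\mathcal{P}_{\mathcal{D}}\cup\mathcal{L}_{\mathcal{D}}$ be a dominating set of the incidence graph of an arbitrary projective plane $\Pi_q$ of order $q$, and let $c$ be the maximum, over all points $P$, of $|[P]\cap\mathcal{L}_{\mathcal{D}}|$. Suppose that $|\mathcal{L}_{\mathcal{D}}|+2-q\leq c\leq q-1$. Then $|\mathcal{L}_{\mathcal{D}}|\geq 4q-2-|\mathcal{D}|$.
   Context: A dominating set $\mathcal{D}=\mathcal{P}_{\mathcal{D}}\cup\mathcal{L}_{\mathcal{D}}$ of the incidence graph of $\Pi_q$ is a set of points $\mathcal{P}_{\mathcal{D}}$ and lines $\mathcal{L}_{\mathcal{D}}$ such that every point not in $\mathcal{P}_{\mathcal{D}}$ lies on a line of $\mathcal{L}_{\mathcal{D}}$ and every line not in $\mathcal{L}_{\mathcal{D}}$ contains a point of $\mathcal{P}_{\mathcal{D}}$. $[P]$ is the set of lines through $P$. *)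

From mathcomp Require Import all_boot all_order all_algebra.
Set Implicit Arguments. Unset Strict Implicit. Unset Printing Implicit Defensive.

Definition projective_plane (Pt Ln : finType) (inc : Pt -> Ln -> bool) : Prop :=
  (forall P Q : Pt, P != Q -> #|[set l : Ln | inc P l && inc Q l]| = 1%N) /\
  (forall l m : Ln, l != m -> #|[set P : Pt | inc P l && inc P m]| = 1%N) /\
  (exists (A : 'I_4 -> Pt), injective A /\
     forall i j k : 'I_4, i != j -> j != k -> i != k ->
       ~ exists l : Ln, [&& inc (A i) l, inc (A j) l & inc (A k) l]).

Definition projective_plane_of_order (q : nat) (Pt Ln : finType)
  (inc : Pt -> Ln -> bool) : Prop :=
  projective_plane inc /\ forall l : Ln, #|[set P : Pt | inc P l]| = q.+1.

Definition pencil (Pt Ln : finType) (inc : Pt -> Ln -> bool) (P : Pt) : {set Ln} :=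
  [set l : Ln | inc P l].

Definition dominating_set (Pt Ln : finType) (inc : Pt -> Ln -> bool)
  (PD : {set Pt}) (LD : {set Ln}) : Prop :=
  (forall P : Pt, P \notin PD -> exists2 l, l \in LD & inc P l) /\
  (forall l : Ln, l \notin LD -> exists2 P, P \in PD & inc P l).

From mathcomp Require Import all_boot all_order all_algebra.
From mathcomp Require Import zify.
(* Take a point P lying on the maximal number c of lines of LD.  Each of the
   s = q + 1 - c lines through P outside LD must be dominated on its q points
   other than P; those not in PD are covered by lines of LD avoiding P, each
   meeting the line once, so at least b = q - (|LD| - c) of them lie in PD.
   These point sets are disjoint, hence |PD| >= s b, and (s - 2)(b - 2) >= 0
   is the claimed bound. *)

Set Implicit Arguments.
Unset Strict Implicit.
Unset Printing Implicit Defensive.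

Lemma sum_card_le_of_disjoint (I T : finType) (S : {set I}) (B : I -> {set T})
    (X : {set T}) :
  (forall i, i \in S -> B i \subset X) ->
  (forall i j x, i \in S -> j \in S -> x \in B i -> x \in B j -> i = j) ->
  (\sum_(i in S) #|B i| <= #|X|)%N.
Proof.
move=> sBX uniqB.
under eq_bigr => i _ do rewrite -sum1_card.
rewrite pair_big_dep sum1dep_card.
set pairs := [set p : I * T | _].
have snd_inj : {in pairs &, injective snd}.
  move=> [i x] [j y]; rewrite !inE /= => /andP[iS xB] /andP[jS yB] eq_xy.
  by rewrite -eq_xy in yB *; rewrite (uniqB i j x).
rewrite -(card_in_imset snd_inj); apply: subset_leq_card.
apply/subsetP => _ /imsetP[[i x] + ->]; rewrite inE /= => /andP[iS xB].
exact: subsetP (sBX i iS) x xB.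
Qed.

Section Incidence.
Variables (Pt Ln : finType) (inc : Pt -> Ln -> bool).
Hypothesis two_points_one_line :
  forall P Q : Pt, P != Q -> #|[set l : Ln | inc P l && inc Q l]| = 1%N.
Hypothesis two_lines_one_point :
  forall l m : Ln, l != m -> #|[set P : Pt | inc P l && inc P m]| = 1%N.

Lemma exists_line_through2 {P Q} : P != Q -> exists l, inc P l && inc Q l.
Proof.
move=> neqPQ; have /set0Pn[l] : [set l | inc P l && inc Q l] != set0.
  by rewrite -card_gt0 two_points_one_line.
by rewrite inE; exists l.
Qed.

Lemma line_through2_uniq {P Q l m} :
  P != Q -> inc P l -> inc Q l -> inc P m -> inc Q m -> l = m.
Proof.
move=> neqPQ Pl Ql Pm Qm.
have /eqP/cards1P[k joinPQ] := two_points_one_line neqPQ.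
have : l \in [set l | inc P l && inc Q l] by rewrite inE Pl Ql.
have : m \in [set l | inc P l && inc Q l] by rewrite inE Pm Qm.
by rewrite joinPQ !inE => /eqP-> /eqP->.
Qed.

Lemma meet_point_uniq {l m P Q} :
  l != m -> inc P l -> inc P m -> inc Q l -> inc Q m -> P = Q.
Proof.
move=> neqlm Pl Pm Ql Qm.
have /eqP/cards1P[R meetlm] := two_lines_one_point neqlm.
have : P \in [set P | inc P l && inc P m] by rewrite inE Pl Pm.
have : Q \in [set P | inc P l && inc P m] by rewrite inE Ql Qm.
by rewrite meetlm !inE => /eqP-> /eqP->.
Qed.

Lemma exists_line_avoiding (A : 'I_4 -> Pt) :
  injective A ->
  (forall i j k : 'I_4, i != j -> j != k -> i != k ->
     ~ exists l, [&& inc (A i) l, inc (A j) l & inc (A k) l]) ->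
  forall P, exists l, ~~ inc P l.
Proof.
move=> injA noncollinear P; apply/existsP; apply: contraT => /existsPn allP; exfalso.
have {}allP l : inc P l by have := allP l; rewrite negbK.
have neqA (i j : 'I_4) : i != j -> A i != A j by apply: contra => /eqP/injA->.
(* If every line passes through P, the lines joining A i to A j and to A k
   both contain A i and P, hence coincide. *)
have collinear3 (i j k : 'I_4) : i != j -> j != k -> i != k -> A i != P -> False.
  move=> nij njk nik niP.
  have [lij /andP[iij jij]] := exists_line_through2 (neqA i j nij).
  have [lik /andP[iik kik]] := exists_line_through2 (neqA i k nik).
  have eqlines := line_through2_uniq niP iij (allP lij) iik (allP lik).
  by apply: (noncollinear i j k nij njk nik); exists lij; rewrite iij jij eqlines kik.
pose o1 : 'I_4 := Ordinal (isT : (1 < 4)%N).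
pose o2 : 'I_4 := Ordinal (isT : (2 < 4)%N).
pose o3 : 'I_4 := Ordinal (isT : (3 < 4)%N).
have [eqA0P | neqA0P] := eqVneq (A ord0) P; last exact: (collinear3 ord0 o1 o2).
by apply: (collinear3 o1 o2 o3) => //; rewrite -eqA0P neqA.
Qed.

Lemma card_line_le_pencil P l0 :
  ~~ inc P l0 -> (#|[set Q | inc Q l0]| <= #|pencil inc P|)%N.
Proof.
move=> nPl0; pose join Q := odflt l0 [pick l | inc P l && inc Q l].
have joinP Q : inc Q l0 -> inc P (join Q) && inc Q (join Q).
  move=> Ql0; rewrite /join; case: pickP => [//|noline].
  have neqPQ : P != Q by apply: contraNneq nPl0 => ->.
  by have [l] := exists_line_through2 neqPQ; rewrite noline.
have join_inj : {in [set Q | inc Q l0] &, injective join}.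
  move=> Q1 Q2; rewrite !inE => Q1l0 Q2l0 eq_join.
  have /andP[Pj Q1j] := joinP _ Q1l0; have /andP[_ Q2j] := joinP _ Q2l0.
  have neq_j_l0 : join Q1 != l0 by apply: contraNneq nPl0 => <-.
  by apply: (meet_point_uniq neq_j_l0 Q1j Q1l0); rewrite // eq_join.
rewrite -(card_in_imset join_inj); apply: subset_leq_card.
by apply/subsetP => _ /imsetP[Q + ->]; rewrite !inE => /joinP/andP[].
Qed.

Lemma card_undominated_on_line {PD : {set Pt}} {LD : {set Ln}} {P l} :
  (forall Q, Q \notin PD -> exists2 k, k \in LD & inc Q k) ->
  inc P l -> l \notin LD ->
  (#|[set Q | inc Q l & Q != P] :\: PD| <= #|LD :\: pencil inc P|)%N.
Proof.
move=> dom_points Pl nlLD; pose cover Q := odflt l [pick k in LD | inc Q k].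
have coverP Q : Q \in [set Q | inc Q l & Q != P] :\: PD ->
    [/\ cover Q \in LD :\: pencil inc P, inc Q (cover Q) & inc Q l].
  rewrite !inE => /andP[nQPD /andP[Ql nQP]].
  rewrite /cover; case: pickP => [k /andP[kLD Qk] | nocover]; last first.
    by have [k kLD Qk] := dom_points Q nQPD; have := nocover k; rewrite kLD Qk.
  split=> //=; rewrite kLD andbT; apply: contraNN nlLD => Pk.
  by rewrite (line_through2_uniq nQP Ql Pl Qk Pk).
have cover_inj : {in [set Q | inc Q l & Q != P] :\: PD &, injective cover}.
  move=> Q1 Q2 /coverP[cLD Q1c Q1l] /coverP[_ Q2c Q2l] eq_cover.
  have neq_c_l : cover Q1 != l.
    by apply: contraTneq cLD => ->; rewrite !inE (negbTE nlLD) andbF.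
  by apply: (meet_point_uniq neq_c_l Q1c Q1l); rewrite // eq_cover.
rewrite -(card_in_imset cover_inj); apply: subset_leq_card.
by apply/subsetP => _ /imsetP[Q /coverP[]] + _ _ ->.
Qed.

Lemma sum_pencil_points_le (X : {set Pt}) {S : {set Ln}} {P} :
  S \subset pencil inc P ->
  (\sum_(l in S) #|[set Q | inc Q l & Q != P] :&: X| <= #|X|)%N.
Proof.
move=> /subsetP sSP.
apply: sum_card_le_of_disjoint => [l _ | l m Q lS mS]; first exact: subsetIr.
rewrite !inE => /andP[/andP[Ql nQP] _] /andP[/andP[Qm _] _].
have := sSP l lS; have := sSP m mS; rewrite !inE => Pm Pl.
exact: line_through2_uniq nQP Ql Pl Qm Pm.
Qed.

Section Order.
Variable q : nat.
Hypothesis card_line : forall l : Ln, #|[set P | inc P l]| = q.+1.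
Hypothesis exists_line_avoiding_point : forall P : Pt, exists l, ~~ inc P l.

Lemma card_pencil_ge P : (q.+1 <= #|pencil inc P|)%N.
Proof.
have [l0 nPl0] := exists_line_avoiding_point P.
by rewrite -(card_line l0); apply: card_line_le_pencil.
Qed.

Lemma card_punctured_line P l : inc P l -> #|[set Q | inc Q l & Q != P]| = q.
Proof.
move=> Pl; apply/eqP; rewrite -eqSS -(card_line l).
rewrite (cardsD1 P [set Q | inc Q l]) inE Pl add1n eqSS.
by apply/eqP/eq_card => Q; rewrite !inE andbC.
Qed.

Lemma card_dominating_points_ge (PD : {set Pt}) (LD : {set Ln}) P :
  dominating_set inc PD LD ->
  ((q.+1 - #|pencil inc P :&: LD|) * (q - #|LD :\: pencil inc P|) <= #|PD|)%N.
Proof.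
move=> [dom_points _]; set S := pencil inc P :\: LD; set b := (q - _)%N.
have cardS : (q.+1 - #|pencil inc P :&: LD| <= #|S|)%N.
  by rewrite /S; have := card_pencil_ge P; have := cardsID LD (pencil inc P); lia.
have dominated l : l \in S -> (b <= #|[set Q | inc Q l & Q != P] :&: PD|)%N.
  rewrite !inE => /andP[nlLD Pl].
  have := card_undominated_on_line dom_points Pl nlLD.
  by have := cardsID PD [set Q | inc Q l & Q != P]; rewrite card_punctured_line //; lia.
apply: leq_trans (sum_pencil_points_le PD (subsetDl _ _)).
apply: (@leq_trans (#|S| * b)); first by rewrite leq_mul2r cardS orbT.
by rewrite -sum_nat_const; apply: leq_sum.
Qed.

End Order.
End Incidence.

Lemma product_bound_arith (q c L d : nat) :
  (c <= L -> L + 2 <= q + c -> c < q ->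
   (q.+1 - c) * (q - (L - c)) <= d -> 4 * q <= d + 2 * L + 2)%N.
Proof.
move=> cL Lc cq; set s := (q.+1 - c)%N; set b := (q - (L - c))%N.
have : (2 * s + 2 * b <= s * b + 4)%N.
  have s2 : (2 <= s)%N by rewrite /s; lia.
  have b2 : (2 <= b)%N by rewrite /b; lia.
  nia.
by rewrite /s /b; lia.
Qed.

Local Open Scope ring_scope.

Theorem lemma4 (q : nat) (Pt Ln : finType) (inc : Pt -> Ln -> bool)
  (PD : {set Pt}) (LD : {set Ln}) :
  projective_plane_of_order q inc ->
  dominating_set inc PD LD ->
  let c : nat := (\max_(P : Pt) #|pencil inc P :&: LD|)%N in
  (#|LD|%:Z + 2 - q%:Z <= c%:Z) -> (c%:Z <= q%:Z - 1) ->
  #|LD|%:Z >= 4 * q%:Z - 2 - (#|PD|%:Z + #|LD|%:Z).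
Proof.
move=> [[two_points [two_lines [A [injA noncollinear]]]] card_line] dom c c_lb c_ub.
have avoiding := exists_line_avoiding two_points injA noncollinear.
have [P cP] : {P | c = #|pencil inc P :&: LD|}.
  by rewrite /c; apply: eq_bigmax; apply/card_gt0P; exists (A ord0).
have := card_dominating_points_ge two_points two_lines card_line avoiding P dom.
have := cardsID (pencil inc P) LD; rewrite setIC -cP => split_LD bound.
rewrite (_ : #|LD :\: pencil inc P| = #|LD| - c)%N in bound; last by lia.
by have := @product_bound_arith q c #|LD| #|PD|; lia.
Qed.
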